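(* Let $\Sigma \rightarrow G$ be a twist, where $G$ is a locally compact Hausdorff étale groupoid, and let $L \colon G \rightarrow [0,\infty)$ be a continuous length function on $G$. Let $p\in\mathbb{Z}_+$. If $f \in H^{2,L,p}(\Sigma; G)$ has open support $U \subseteq G$, then $f$ lies in the closure of $C_c(\Sigma|_U;U)$ with respect to $\|\cdot\|_{2,p,L}$. In particular, if $f \in H^{2,L}(\Sigma; G)$ has open support $U \subseteq G$, then $f \in H^{2,L}(\Sigma|_U;U)$.
   Context: A twist $\Sigma\rightarrow G$ is a locally trivial central extension $\mathbb{T}\times G^{(0)}\to\Sigma\to G$; it determines a line bundle over $G$ whose fibres carry an absolute value. $C_c(\Sigma;G)$ is the space of continuous compactly supported sections of this bundle, $C_0(\Sigma;G)$ the continuous sections vanishing at infinity, and for $U\subseteq G$, $C_c(\Sigma|_U;U)$ (resp. $C_0(\Sigma|_U;U)$) the sections supported in $U$. The support of a section $f$ is $\operatorname{supp}(f)=\{\gamma: f(\gamma)\ne0\}$. A length function is $L\colon G\to[0,\infty)$ with $L|_{G^{(0)}}=0$, $L(\gamma)=L(\gamma^{-1})$, and $L(\gamma_1\gamma_2)\le L(\gamma_1)+L(\gamma_2)$ for composable pairs. For $p\in\mathbb{Z}_+$ and $f\in C_c(\Sigma;G)$ set $\|f\|_{2,p,L}=\max\{\sup_{x}(\sum_{\gamma\in G_x}|f(\gamma)|^2(1+L(\gamma))^{2p})^{1/2},\ \sup_x(\sum_{\gamma\in G^x}|f(\gamma)|^2(1+L(\gamma))^{2p})^{1/2}\}$,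 where $G_x=s^{-1}(x)$, $G^x=r^{-1}(x)$. $H^{2,L,p}(\Sigma;G)$ is the completion of $C_c(\Sigma;G)$ in $\|\cdot\|_{2,p,L}$ (viewed as sections), and the Schwartz space is $H^{2,L}(\Sigma;G)=\bigcap_{p\in\mathbb{Z}_+}H^{2,L,p}(\Sigma;G)\cap C_0(\Sigma;G)$. For $U\subseteq G$, $H^{2,L}(\Sigma|_U;U)=\bigcap_{p\ge1}\overline{C_c(\Sigma|_U;U)}^{\|\cdot\|_{2,p,L}}\cap C_0(\Sigma|_U;U)$. *)

From HB Require Import structures.
From mathcomp Require Import all_boot all_order all_algebra.
From mathcomp Require Import all_classical all_reals all_analysis.
From mathcomp Require Import complex.
Set Implicit Arguments.
Unset Strict Implicit.
Unset Printing Implicit Defensive.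
Import Order.TTheory GRing.Theory Num.Theory.
Import numFieldNormedType.Exports.
Local Open Scope ring_scope.
Local Open Scope classical_set_scope.

Definition CC (R : realType) : numClosedFieldType := R[i].
HB.instance Definition _ (R : realType) :=
  PseudoPointedMetric.copy (CC R) (CC R)^o.

Definition cabs (R : realType) (z : CC R) : R := Normc.normc (z : R[i]).

Definition circle (R : realType) : set (CC R) := [set z | `|z| = 1].

(** groupoid data on a carrier T: unit space, source, range, (partial)
    multiplication (g h is meaningful when src g = rng h), inverse. *)
Record gpd (T : Type) := Gpd {
  g_unit : set T;
  g_src : T -> T;
  g_rng : T -> T;
  g_mul : T -> T -> T;
  g_inv : T -> T }.

Definition composable (T : Type) (G : gpd T) (g h : T) : Prop :=
  g_src G g = g_rng G h.

Record is_groupoid (T : Type) (G : gpd T) : Prop := {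
  gp_src_unit : forall g, g_unit G (g_src G g);
  gp_rng_unit : forall g, g_unit G (g_rng G g);
  gp_unit_src : forall x, g_unit G x -> g_src G x = x;
  gp_unit_rng : forall x, g_unit G x -> g_rng G x = x;
  gp_src_mul : forall g h, composable G g h -> g_src G (g_mul G g h) = g_src G h;
  gp_rng_mul : forall g h, composable G g h -> g_rng G (g_mul G g h) = g_rng G g;
  gp_mulA : forall g h k, composable G g h -> composable G h k ->
      g_mul G (g_mul G g h) k = g_mul G g (g_mul G h k);
  gp_mulg1 : forall g, g_mul G g (g_src G g) = g;
  gp_mul1g : forall g, g_mul G (g_rng G g) g = g;
  gp_src_inv : forall g, g_src G (g_inv G g) = g_rng G g;
  gp_rng_inv : forall g, g_rng G (g_inv G g) = g_src G g;
  gp_mulgV : forall g, g_mul G g (g_inv G g) = g_rng G g;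
  gp_mulVg : forall g, g_mul G (g_inv G g) g = g_src G g }.

Record is_top_groupoid (T : topologicalType) (G : gpd T) : Prop := {
  tg_groupoid : is_groupoid G;
  tg_mul_cont : {within [set p : T * T | composable G p.1 p.2],
                  continuous (fun p => g_mul G p.1 p.2)};
  tg_inv_cont : continuous (g_inv G) }.

Definition local_homeo (T U : topologicalType) (f : T -> U) : Prop :=
  forall g, exists V : set T,
    [/\ open V, V g, {in V &, injective f}, {within V, continuous f} &
        forall W, open W -> W `<=` V -> open (f @` W)].

Definition lch_etale_groupoid (T : topologicalType) (G : gpd T) : Prop :=
  [/\ is_top_groupoid G, hausdorff_space T, locally_compact [set: T]
    & local_homeo (g_rng G)].

(** A twist  T x G0 --iota--> Sigma --pi--> G.  [iota z x] is the image of
    (z, x) for z in the circle and x in the unit space of G. *)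
Record is_twist (R : realType) (G S : topologicalType) (GG : gpd G)
    (SS : gpd S) (pi : S -> G) (iota : CC R -> G -> S) : Prop := {
  tw_top : is_top_groupoid SS;
  tw_pi_cont : continuous pi;
  tw_pi_open : forall W, open W -> open (pi @` W);
  tw_pi_surj : forall g, exists s, pi s = g;
  tw_pi_mul : forall s t, composable SS s t ->
      pi (g_mul SS s t) = g_mul GG (pi s) (pi t);
  tw_pi_src : forall s, pi (g_src SS s) = g_src GG (pi s);
  tw_pi_rng : forall s, pi (g_rng SS s) = g_rng GG (pi s);
  tw_pi_unit : pi @` g_unit SS = g_unit GG;
  tw_pi_unit_inj : {in g_unit SS &, injective pi};
  (* iota : T x G0 -> Sigma is a groupoid homomorphism from the trivial
     group bundle, which is a homeomorphism onto pi^-1(G0) *)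
  tw_iota_unit : forall x, g_unit GG x -> g_unit SS (iota 1 x);
  tw_iota_src : forall z x, circle z -> g_unit GG x ->
      g_src SS (iota z x) = iota 1 x;
  tw_iota_rng : forall z x, circle z -> g_unit GG x ->
      g_rng SS (iota z x) = iota 1 x;
  tw_iota_mul : forall z w x, circle z -> circle w -> g_unit GG x ->
      iota (z * w) x = g_mul SS (iota z x) (iota w x);
  tw_iota_inj : forall z w x y, circle z -> circle w -> g_unit GG x ->
      g_unit GG y -> iota z x = iota w y -> z = w /\ x = y;
  tw_iota_cont : {within [set p : CC R * G | circle p.1 /\ g_unit GG p.2],
                   continuous (fun p => iota p.1 p.2)};
  tw_iota_embed : forall B : set (CC R * G), open B ->
      exists O : set S, open O /\
        (fun p => iota p.1 p.2) @` (B `&` [set p | circle p.1 /\ g_unit GG p.2])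
        = O `&` (fun p => iota p.1 p.2) @` [set p | circle p.1 /\ g_unit GG p.2];
  tw_exact : forall s, g_unit GG (pi s) <->
      exists z x, [/\ circle z, g_unit GG x & s = iota z x];
  tw_central : forall z s, circle z ->
      g_mul SS (iota z (g_rng GG (pi s))) s = g_mul SS s (iota z (g_src GG (pi s)));
  tw_loc_triv : forall g, exists (U : set G) (sec : G -> S) (zeta : S -> CC R),
      [/\ open U /\ U g, {within U, continuous sec},
          forall h, U h -> pi (sec h) = h,
          {within pi @^-1` U, continuous zeta} &
          forall s, U (pi s) -> circle (zeta s) /\
             s = g_mul SS (iota (zeta s) (g_rng GG (pi s))) (sec (pi s))] }.

Definition length_function (R : realType) (G : topologicalType) (GG : gpd G)
    (L : G -> R) : Prop :=
  [/\ forall g, 0 <= L g,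
      forall x, g_unit GG x -> L x = 0,
      forall g, L g = L (g_inv GG g) &
      forall g h, composable GG g h -> L (g_mul GG g h) <= L g + L h].

(** Sections of the line bundle of Sigma -> G are identified with the
    T-equivariant functions f : Sigma -> C, f(z.s) = conj(z) f(s). *)
Definition is_section (R : realType) (G S : topologicalType) (GG : gpd G)
    (SS : gpd S) (pi : S -> G) (iota : CC R -> G -> S) (f : S -> CC R) : Prop :=
  forall z s, circle z -> f (g_mul SS (iota z (g_rng GG (pi s))) s) = z^* * f s.

(** the absolute value |f(g)| of a section at g in G (all lifts give the
    same value for a section) *)
Definition sabs (R : realType) (G S : topologicalType) (pi : S -> G)
    (f : S -> CC R) (g : G) : R :=
  sup [set r | exists s, pi s = g /\ r = cabs (f s)].

Definition supp (R : realType) (G S : topologicalType) (pi : S -> G)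
    (f : S -> CC R) : set G :=
  [set g | exists s, pi s = g /\ f s != 0].

(** C_c(Sigma|_U; U) (sections supported in U, extended by zero);
    C_c(Sigma; G) is the case U = setT *)
Definition Cc_on (R : realType) (G S : topologicalType) (GG : gpd G)
    (SS : gpd S) (pi : S -> G) (iota : CC R -> G -> S) (U : set G)
    (f : S -> CC R) : Prop :=
  [/\ is_section GG SS pi iota f, continuous f &
      exists K : set G, [/\ compact K, K `<=` U &
                            forall s, ~ K (pi s) -> f s = 0]].

(** C_0(Sigma|_U; U) (sections on U vanishing at infinity on U, extended
    by zero); C_0(Sigma; G) is the case U = setT *)
Definition C0_on (R : realType) (G S : topologicalType) (GG : gpd G)
    (SS : gpd S) (pi : S -> G) (iota : CC R -> G -> S) (U : set G)
    (f : S -> CC R) : Prop :=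
  [/\ is_section GG SS pi iota f,
      forall s, ~ U (pi s) -> f s = 0,
      {within pi @^-1` U, continuous f} &
      forall e : R, 0 < e -> exists K : set G, [/\ compact K, K `<=` U &
                            forall s, ~ K (pi s) -> cabs (f s) < e]].

Definition norm2pL (R : realType) (G S : topologicalType) (GG : gpd G)
    (pi : S -> G) (L : G -> R) (p : nat) (f : S -> CC R) : \bar R :=
  maxe
   (ereal_sup [set sqrte (\esum_(g in [set g | g_src GG g = x])
                 ((sabs pi f g) ^+ 2 * (1 + L g) ^+ (2 * p))%:E)
               | x in g_unit GG])
   (ereal_sup [set sqrte (\esum_(g in [set g | g_rng GG g = x])
                 ((sabs pi f g) ^+ 2 * (1 + L g) ^+ (2 * p))%:E)
               | x in g_unit GG]).

Definition in_closure_Cc (R : realType) (G S : topologicalType) (GG : gpd G)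
    (SS : gpd S) (pi : S -> G) (iota : CC R -> G -> S) (L : G -> R) (p : nat)
    (U : set G) (f : S -> CC R) : Prop :=
  forall e : R, 0 < e -> exists h, Cc_on GG SS pi iota U h /\
    (norm2pL GG pi L p (fun s => (f s - h s)%R) < e%:E)%E.

Definition H2Lp (R : realType) (G S : topologicalType) (GG : gpd G)
    (SS : gpd S) (pi : S -> G) (iota : CC R -> G -> S) (L : G -> R) (p : nat)
    (f : S -> CC R) : Prop :=
  is_section GG SS pi iota f /\ in_closure_Cc GG SS pi iota L p setT f.

(** H^{2,L}(Sigma|_U; U) (U = setT gives the Schwartz space H^{2,L}(Sigma;G)) *)
Definition H2L_on (R : realType) (G S : topologicalType) (GG : gpd G)
    (SS : gpd S) (pi : S -> G) (iota : CC R -> G -> S) (L : G -> R)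
    (U : set G) (f : S -> CC R) : Prop :=
  (forall p : nat, (0 < p)%N -> in_closure_Cc GG SS pi iota L p U f) /\
  C0_on GG SS pi iota U f.

(* Let f be in the closure of C_c(Sigma; G) and h in C_c(Sigma; G), supported
   in a compact K, with ||f - h|| < e/8.  Since the norm dominates the sup norm,
   f is continuous, so h * rho(|f|), with rho = 0 on [0, d] and rho = 1 on
   [2d, oo), is supported in the compact set K /\ {|f| >= d}, inside supp f.
   The pointwise error grows to at most 8|f - h|^2 + 8d^2, and only on K.
   As G is etale, s and r are locally injective, so the compact K meets every
   source and range fibre in at most N points; the weight (1 + L)^(2p) is
   bounded on K, so each fibre sum grows by O(d^2 N), small for small d.
   For the C_0 part, the compact sets outside which |f| < e are cut down to
   their intersection with {|f| >= e}, which lies in supp f. *)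

From HB Require Import structures.
From mathcomp Require Import all_boot all_order all_algebra.
From mathcomp Require Import all_classical all_reals all_analysis.
From mathcomp Require Import complex.
From mathcomp Require Import ring lra.
Set Implicit Arguments.
Unset Strict Implicit.
Unset Printing Implicit Defensive.
Import Order.TTheory GRing.Theory Num.Theory.
Import numFieldNormedType.Exports.
Local Open Scope ring_scope.
Local Open Scope classical_set_scope.

Section ComplexModulus.
Variable R : realType.
Implicit Types z w : CC R.

Lemma normcE z : `|z| = ((cabs z)%:C)%C.
Proof. by rewrite normc_def /cabs /Normc.normc; case: z. Qed.

Lemma cabs_ge0 z : 0 <= cabs z.
Proof. by case: z => a b; exact: sqrtr_ge0. Qed.

Lemma cabs0 : cabs (0 : CC R) = 0.
Proof. exact: Normc.normc0. Qed.

Lemma cabsM z w : cabs (z * w) = cabs z * cabs w.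
Proof. exact: Normc.normcM. Qed.

Lemma cabsD z w : cabs (z + w) <= cabs z + cabs w.
Proof. exact: le_normcD. Qed.

Lemma cabsN z : cabs (- z) = cabs z.
Proof. exact: normcN. Qed.

Lemma cabsJ z : cabs z^* = cabs z.
Proof. by have := normcJ z; rewrite !normcE => -[]. Qed.

Lemma cabs_real (r : R) : cabs ((r%:C)%C : CC R) = `|r|.
Proof. by rewrite /cabs /Normc.normc /= expr0n /= addr0 sqrtr_sqr. Qed.

Lemma cabs_circle z : circle z -> cabs z = 1.
Proof. by rewrite /circle /= normcE => -[]. Qed.

Lemma cabs_circleM z w : circle z -> cabs (z^* * w) = cabs w.
Proof. by move=> /cabs_circle z1; rewrite cabsM cabsJ z1 mul1r. Qed.

Lemma cabs_dist_dist z w : `|cabs z - cabs w| <= cabs (z - w).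
Proof.
have wz : cabs (w - z) = cabs (z - w) by rewrite -cabsN opprB.
have := cabsD (z - w) w; have := cabsD (w - z) z.
rewrite !subrK wz ler_norml => ? ?.
by apply/andP; split; lra.
Qed.

Lemma continuous_cabsP (T : topologicalType) (f : T -> CC R) x :
  {for x, continuous f} <->
  forall e : R, 0 < e -> \forall y \near x, cabs (f x - f y) < e.
Proof.
split=> [/cvgrPdist_lt fx e e0 | fx].
  have /fx : 0 < ((e%:C)%C : CC R) by rewrite ltcR.
  by apply: filterS => y; rewrite normcE ltcR.
apply/cvgrPdist_lt => -[a b]; rewrite ltcE /= => /andP[/eqP -> a0].
by apply: filterS (fx a a0) => y; rewrite normcE ltcR.
Qed.

Lemma open_cabs_lt (T : topologicalType) (f : T -> CC R) d :
  continuous f -> open [set x | cabs (f x) < d].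
Proof.
move=> fc; rewrite openE => x /= fxd.
have dx : 0 < d - cabs (f x) by rewrite subr_gt0.
near=> y.
have : cabs (f x - f y) < d - cabs (f x).
  by near: y; exact: (continuous_cabsP f x).1 (fc x) _ dx.
have := cabs_dist_dist (f x) (f y); rewrite ler_norml /= => /andP[? _]; lra.
Unshelve. all: by end_near.
Qed.

End ComplexModulus.

Section Ramp.
Variable R : realType.
Implicit Types d r : R.

Definition ramp d r : R := Num.min 1 (Num.max 0 (r / d - 1)).

Local Ltac ramp_cases d r :=
  rewrite /ramp; case: (leP 0 (r / d - 1)) => ?;
  [case: (leP 1 (r / d - 1)) => ? | case: (leP 1 0) => ?].

Lemma ramp_ge0 d r : 0 <= ramp d r.
Proof. by ramp_cases d r; lra. Qed.

Lemma ramp_le1 d r : ramp d r <= 1.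
Proof. by ramp_cases d r; lra. Qed.

Lemma ramp_eq0 d r : 0 < d -> r <= d -> ramp d r = 0.
Proof.
move=> d0 rd; have : r / d <= 1 by rewrite ler_pdivrMr // mul1r.
by ramp_cases d r; lra.
Qed.

Lemma ramp_lt1 d r : 0 < d -> ramp d r < 1 -> r < 2 * d.
Proof.
by move=> d0; rewrite -ltr_pdivrMr //; ramp_cases d r; lra.
Qed.

Lemma ramp_lipschitz d r r' : 0 < d -> `|ramp d r - ramp d r'| <= `|r - r'| / d.
Proof.
move=> d0.
have -> : `|r - r'| / d = `|(r / d - 1) - (r' / d - 1)|.
  have -> : (r / d - 1) - (r' / d - 1) = (r - r') / d by ring.
  by rewrite normrM [`|d^-1|]ger0_norm ?invr_ge0 ?(ltW d0).
have := ler_norm ((r / d - 1) - (r' / d - 1)).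
have : - ((r / d - 1) - (r' / d - 1)) <= `|(r / d - 1) - (r' / d - 1)|.
  by rewrite -normrN ler_norm.
by ramp_cases d r; ramp_cases d r'; rewrite ler_norml => ? ?; apply/andP; split; lra.
Qed.

(* Where the ramp is below 1 we have [|a| < 2 d], hence [|b| <= 2 d + |a - b|]. *)
Lemma ramp_cutoff_err (a b : CC R) d : 0 < d ->
  cabs (a - b * ((ramp d (cabs a))%:C)%C) ^+ 2 <= 8 * cabs (a - b) ^+ 2 + 8 * d ^+ 2.
Proof.
move=> d0; set t := ramp d (cabs a).
have t0 : 0 <= t := ramp_ge0 d (cabs a).
have t1 : t <= 1 := ramp_le1 d (cabs a).
have ab0 := cabs_ge0 (a - b).
have split_err : cabs (a - b * (t%:C)%C) <= cabs (a - b) + cabs b * (1 - t).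
  have -> : a - b * (t%:C)%C = (a - b) + b * (((1 - t)%:C)%C).
    by rewrite rmorphB rmorph1 /=; ring.
  have := cabsD (a - b) (b * (((1 - t)%:C)%C)).
  by rewrite cabsM cabs_real ger0_norm ?subr_ge0.
have tail_err : cabs b * (1 - t) <= 2 * d + cabs (a - b).
  have [->|t_lt1] := eqVneq t 1; first by rewrite subrr mulr0; lra.
  have a2d : cabs a < 2 * d by apply: ramp_lt1 => //; rewrite lt_neqAle t_lt1.
  have : cabs b <= cabs a + cabs (a - b).
    by have := cabsD a (- (a - b)); rewrite cabsN opprB addrC subrK.
  have : cabs b * (1 - t) <= cabs b by rewrite ler_piMr ?cabs_ge0 //; lra.
  lra.
have err0 := cabs_ge0 (a - b * (t%:C)%C).
have := sqr_ge0 (cabs (a - b) - d).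
nra.
Qed.

Lemma continuous_ramp_cabs (T : topologicalType) (f : T -> CC R) d : 0 < d ->
  continuous f -> continuous (fun x => ((ramp d (cabs (f x)))%:C)%C : CC R).
Proof.
move=> d0 fc x; apply/continuous_cabsP => e e0; near=> y.
have : cabs (f x - f y) < e * d.
  by near: y; exact: (continuous_cabsP f x).1 (fc x) _ (mulr_gt0 e0 d0).
rewrite -rmorphB cabs_real => fxy.
apply: le_lt_trans (ramp_lipschitz _ _ d0) _.
by rewrite ltr_pdivrMr //; exact: le_lt_trans (cabs_dist_dist _ _) fxy.
Unshelve. all: by end_near.
Qed.

End Ramp.

Lemma esumZl_le (R : realType) (T : choiceType) (I : set T) (c : R)
    (a : T -> \bar R) : 0 <= c -> (forall i, 0 <= a i)%E ->
  (\esum_(i in I) (c%:E * a i) <= c%:E * \esum_(i in I) a i)%E.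
Proof.
move=> c0 a0; apply: ge_ereal_sup => _ [X [finX XI] <-].
rewrite -ge0_mule_fsumr // lee_wpmul2l ?lee_fin //.
by apply: ereal_sup_ubound; exists X.
Qed.

Lemma sqrte_le (R : realType) (x : \bar R) (c : R) : 0 <= c ->
  (sqrte x <= c%:E)%E = (x <= (c ^+ 2)%:E)%E.
Proof.
move=> c0; have -> : (c%:E = sqrte (c ^+ 2)%:E)%E by rewrite /= sqrtr_sqr ger0_norm.
by rewrite lee_sqrt // lee_fin sqr_ge0.
Qed.

Lemma compact_finite_subcover (T : topologicalType) (K : set T) (V : T -> set T) :
  compact K -> (forall x, K x -> open (V x)) -> (forall x, K x -> V x x) ->
  exists s : seq T, forall x, K x -> exists2 i, i \in s & V i x.
Proof.
move=> cK oV Vx.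
have [[x0 _]|K0] := pselect (K !=set0); last first.
  by exists [::] => x Kx; exfalso; apply: K0; exists x.
pose Tp : ptopologicalType := HB.pack T (isPointed.Build T x0).
have : @cover_compact Tp K by rewrite -compact_cover.
move=> /(_ T K V oV) [|D _ KD]; first by move=> x Kx; exists x => //; exact: Vx.
by exists (finmap.enum_fset D) => x /KD [i Di Vix]; exists i.
Qed.

Lemma continuous_compact_ubound (R : realType) (T : topologicalType)
    (f : T -> R) (K : set T) :
  continuous f -> compact K -> exists M, forall x, K x -> f x <= M.
Proof.
move=> fc cK.
have [M [_ HM]] := compact_bounded (continuous_compact (continuous_subspaceT fc) cK).
exists (M + 1) => x Kx; apply: le_trans (ler_norm _) _.
by apply: (HM (M + 1)); [rewrite ltrDl | exists x].
Qed.

Definition locally_injective (T : topologicalType) (U : Type) (q : T -> U) :=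
  forall x, exists V : set T, [/\ open V, V x & {in V &, injective q}].

(* Each fibre meets each of finitely many injectivity neighbourhoods
   covering [K] at most once. *)
Lemma fibre_count_le (R : realType) (T : topologicalType) (U : Type)
    (q : T -> U) (K : set T) :
  locally_injective q -> compact K ->
  exists N : nat, forall y,
    (\esum_(x in q @^-1` [set y]) (\1_K x : R)%:E <= N%:R%:E)%E.
Proof.
move=> q_inj cK; have [V HV] := choice q_inj.
have [D KD] : exists D : seq T, forall x, K x -> exists2 i, i \in D & V i x.
  by apply: compact_finite_subcover => // x _; case: (HV x).
exists (size D) => y.
have cover_indic x : ((\1_K x : R)%:E <= \sum_(i <- D) (\1_(V i) x : R)%:E)%E.
  rewrite indicE; have [/set_mem Kx|_] := boolP (x \in K); last first.
    by apply: sume_ge0 => i _; rewrite lee_fin.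
  have [i Di Vix] := KD x Kx.
  rewrite (big_rem i) //= indicE mem_set // leeDl //.
  by apply: sume_ge0 => j _; rewrite lee_fin.
have fibre_meets_once i :
    (\esum_(x in q @^-1` [set y]) (\1_(V i) x : R)%:E <= 1%:E)%E.
  have -> : \esum_(x in q @^-1` [set y]) (\1_(V i) x : R)%:E =
            \esum_(x in q @^-1` [set y] `&` V i) 1%:E.
    by rewrite esum_mkcondr; apply: eq_esum => x _; rewrite indicE; case: ifP.
  have [[x0 [qx0 Vx0]]|none] := pselect ((q @^-1` [set y] `&` V i) !=set0).
    rewrite (_ : _ `&` _ = [set x0]) ?esum_set1 //.
    apply/seteqP; split=> [x [qx Vx]|x ->] //=.
    by case: (HV i) => _ _; apply; rewrite ?inE // qx qx0.
  rewrite (_ : _ `&` _ = set0) ?esum_set0 ?lee_fin //.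
  by apply/seteqP; split=> // x Fx; apply: none; exists x.
apply: le_trans (le_esum (fun x _ => cover_indic x)) _.
rewrite esum_sum; last by move=> x i _ _; rewrite lee_fin.
rewrite -sum1_size natr_sum -sumEFin; apply: lee_sum => i _.
exact: fibre_meets_once.
Qed.

Section Groupoid.
Variables (T : Type) (G : gpd T).
Hypothesis HG : is_groupoid G.

Lemma gp_invK : involutive (g_inv G).
Proof.
move=> g; set k := g_inv G (g_inv G g).
have src_k : g_src G k = g_src G g by rewrite (gp_src_inv HG) (gp_rng_inv HG).
have kg : composable G k (g_inv G g) by rewrite /composable (gp_src_inv HG).
have gig : composable G (g_inv G g) g by rewrite /composable (gp_src_inv HG).
rewrite -[k](gp_mulg1 HG) src_k -(gp_mulVg HG g) -(gp_mulA HG) //.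
by rewrite /k (gp_mulVg HG) (gp_src_inv HG) (gp_mul1g HG).
Qed.

(* The fibres [G_x] and [G^x] over units [x], over which [norm2pL] takes its
   two suprema. *)
Definition unit_fibre (F : set T) : Prop :=
  exists2 x, g_unit G x &
    F = [set g | g_src G g = x] \/ F = [set g | g_rng G g = x].

End Groupoid.

Section EtaleGroupoid.
Variables (T : topologicalType) (G : gpd T).
Hypothesis Het : lch_etale_groupoid G.

Let HG : is_groupoid G. Proof. by case: Het => [[]]. Qed.

Lemma etale_rng_locally_injective : locally_injective (g_rng G).
Proof.
case: Het => _ _ _ rng_homeo g.
by have [V [oV Vg injV _ _]] := rng_homeo g; exists V.
Qed.

Lemma etale_src_locally_injective : locally_injective (g_src G).
Proof.
move=> g; have [V [oV Vg injV]] := etale_rng_locally_injective (g_inv G g).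
have inv_cont : continuous (g_inv G) by case: Het => -[].
exists (g_inv G @^-1` V); split=> //; first exact: open_comp.
move=> a b Va Vb src_ab; apply: (can_inj (gp_invK HG)); apply: injV => //.
by rewrite !(gp_rng_inv HG).
Qed.

Lemma etale_fibre_count_le (R : realType) (K : set T) : compact K ->
  exists N : nat, forall F, unit_fibre G F ->
    (\esum_(g in F) (\1_K g : R)%:E <= N%:R%:E)%E.
Proof.
move=> cK.
have [Ns HNs] := fibre_count_le R etale_src_locally_injective cK.
have [Nr HNr] := fibre_count_le R etale_rng_locally_injective cK.
exists (maxn Ns Nr) => F [x _ [->|->]].
  by apply: le_trans (HNs x) _; rewrite lee_fin ler_nat leq_maxl.
by apply: le_trans (HNr x) _; rewrite lee_fin ler_nat leq_maxr.
Qed.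

End EtaleGroupoid.

Section TwistedSections.
Variables (R : realType) (G S : topologicalType) (GG : gpd G) (SS : gpd S)
  (pi : S -> G) (iota : CC R -> G -> S).
Hypothesis Htw : is_twist GG SS pi iota.
Implicit Types (f h k : S -> CC R) (s t : S).

(* Local triviality writes every [u] over [pi t] as [zeta u . sec (pi t)] with
   [|zeta u| = 1]. *)
Lemma section_cabs_fibre f s t : is_section GG SS pi iota f ->
  pi s = pi t -> cabs (f s) = cabs (f t).
Proof.
move=> Hf st.
have [U [sec [zeta [[_ Ut] _ secK _ triv]]]] := tw_loc_triv Htw (pi t).
suff cabs_sec u : pi u = pi t -> cabs (f u) = cabs (f (sec (pi t))).
  by rewrite !cabs_sec.
move=> ut; have Uu : U (pi u) by rewrite ut.
have [zu {1}->] := triv u Uu.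
have := Hf (zeta u) (sec (pi t)) zu; rewrite secK // -ut => ->.
by rewrite ut cabs_circleM.
Qed.

Lemma sabsE f s : is_section GG SS pi iota f -> sabs pi f (pi s) = cabs (f s).
Proof.
move=> Hf; rewrite /sabs (_ : [set r | _] = [set cabs (f s)]) ?sup1 //.
apply/seteqP; split=> [r [t [ts ->]]|r ->] /=; last by exists s.
exact: section_cabs_fibre.
Qed.

Lemma is_sectionB f h : is_section GG SS pi iota f -> is_section GG SS pi iota h ->
  is_section GG SS pi iota (fun s => f s - h s).
Proof. by move=> Hf Hh z s cz; rewrite Hf // Hh // mulrBr. Qed.

Lemma is_sectionM_cabs f h (F : R -> CC R) : is_section GG SS pi iota f ->
  is_section GG SS pi iota h ->
  is_section GG SS pi iota (fun s => h s * F (cabs (f s))).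
Proof. by move=> Hf Hh z s cz; rewrite Hf // Hh // cabs_circleM // mulrA. Qed.

(* The set where [|f| >= d]; it is closed because [pi] is open. *)
Definition superlevel f (d : R) : set G := ~` (pi @` [set s | cabs (f s) < d]).

Lemma closed_superlevel f d : continuous f -> closed (superlevel f d).
Proof. by move=> fc; rewrite closedC; apply: (tw_pi_open Htw); exact: open_cabs_lt. Qed.

Lemma superlevelP f d s : is_section GG SS pi iota f ->
  superlevel f d (pi s) <-> d <= cabs (f s).
Proof.
move=> Hf; split=> [fs|fs [t ft ts]].
  by rewrite leNgt; apply/negP => fsd; apply: fs; exists s.
by move: ft; rewrite /= (section_cabs_fibre Hf ts) ltNge fs.
Qed.

Lemma superlevel_sub_supp f d : is_section GG SS pi iota f -> 0 < d ->
  superlevel f d `<=` supp pi f.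
Proof.
move=> Hf d0 g; have [s <-] := tw_pi_surj Htw g.
move=> /(superlevelP _ _ Hf) fs; exists s; split=> //.
by apply/eqP => f0; move: fs; rewrite f0 cabs0; lra.
Qed.

Lemma C0_on_supp f : C0_on GG SS pi iota setT f -> C0_on GG SS pi iota (supp pi f) f.
Proof.
move=> [Hf _ fc vanish].
have {}fc : continuous f by apply/continuous_subspace_setT; rewrite preimage_setT in fc.
split=> //.
- move=> s fs; apply: contrapT => fs0; apply: fs; exists s; split=> //; exact/eqP.
- exact: continuous_subspaceT.
- move=> e e0; have [K [cK _ HK]] := vanish e e0.
  exists (K `&` superlevel f e); split.
  + by apply: compact_closedI => //; exact: closed_superlevel.
  + by move=> g [_]; exact: superlevel_sub_supp.
  + move=> s Ks; have [Kps|] := pselect (K (pi s)); last exact: HK.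
    by rewrite ltNge; apply/negP => /(superlevelP _ _ Hf) fs; apply: Ks.
Qed.

End TwistedSections.

Section WeightedNorm.
Variables (R : realType) (G S : topologicalType) (GG : gpd G) (SS : gpd S)
  (pi : S -> G) (iota : CC R -> G -> S) (L : G -> R) (p : nat).
Hypothesis Htw : is_twist GG SS pi iota.
Hypothesis HGG : is_groupoid GG.
Hypothesis L_ge0 : forall g, 0 <= L g.
Implicit Types (f h k : S -> CC R).

Definition fibre_sum (F : set G) k : \bar R :=
  \esum_(g in F) ((sabs pi k g) ^+ 2 * (1 + L g) ^+ (2 * p))%:E.

Lemma weight_ge1 g : 1 <= (1 + L g) ^+ (2 * p).
Proof. by rewrite exprn_ege1 // lerDl. Qed.

Lemma fibre_sum_le_norm2pL F k : unit_fibre GG F ->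
  (sqrte (fibre_sum F k) <= norm2pL GG pi L p k)%E.
Proof.
move=> [x ux [->|->]]; rewrite /norm2pL le_max; apply/orP; [left|right];
  by apply: ereal_sup_ubound; exists x.
Qed.

Lemma norm2pL_le k (c : R) :
  (forall F, unit_fibre GG F -> (sqrte (fibre_sum F k) <= c%:E)%E) ->
  (norm2pL GG pi L p k <= c%:E)%E.
Proof.
move=> Hc; rewrite /norm2pL ge_max; apply/andP.
by split; apply: ge_ereal_sup => _ [x ux <-]; apply: Hc; exists x => //; [left|right].
Qed.

Lemma cabs_le_norm2pL k s : is_section GG SS pi iota k ->
  ((cabs (k s))%:E <= norm2pL GG pi L p k)%E.
Proof.
move=> Hk; pose F := [set g | g_src GG g = g_src GG (pi s)].
apply: le_trans (fibre_sum_le_norm2pL (F := F) k _); last first.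
  by exists (g_src GG (pi s)); [exact: gp_src_unit | left].
have -> : (cabs (k s))%:E = sqrte (cabs (k s) ^+ 2)%:E.
  by rewrite /= sqrtr_sqr ger0_norm ?cabs_ge0.
rewrite lee_sqrt; last first.
  by apply: esum_ge0 => g _; rewrite lee_fin mulr_ge0 ?sqr_ge0 ?exprn_ge0 ?addr_ge0.
apply: esum_ge; exists [set pi s]; first by split; [exact: finite_set1 | move=> g ->].
by rewrite fsbig_set1 lee_fin (sabsE Htw) // ler_peMr ?sqr_ge0 ?weight_ge1.
Qed.

(* Convergence in [norm2pL] dominates uniform convergence. *)
Lemma in_closure_Cc_continuous f U : is_section GG SS pi iota f ->
  in_closure_Cc GG SS pi iota L p U f -> continuous f.
Proof.
move=> Hf Hcl s0; apply/continuous_cabsP => e e0.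
have e3 : 0 < e / 3 by rewrite divr_gt0.
have [h [[Hh hc _] fh]] := Hcl _ e3.
have unif s : cabs (f s - h s) < e / 3.
  rewrite -lte_fin; apply: le_lt_trans fh.
  exact: cabs_le_norm2pL s (is_sectionB Hf Hh).
near=> s.
have : cabs (h s0 - h s) < e / 3.
  by near: s; exact: (continuous_cabsP h s0).1 (hc s0) _ e3.
have -> : f s0 - f s = (f s0 - h s0) + ((h s0 - h s) - (f s - h s)) by ring.
have := cabsD (f s0 - h s0) ((h s0 - h s) - (f s - h s)).
have := cabsD (h s0 - h s) (- (f s - h s)); rewrite cabsN.
have := unif s0; have := unif s; lra.
Unshelve. all: by end_near.
Qed.

Lemma weight_ubound (K : set G) : continuous L -> compact K ->
  exists2 C : R, 0 <= C & forall g, K g -> (1 + L g) ^+ (2 * p) <= C.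
Proof.
move=> Lc cK; have [M HM] := continuous_compact_ubound Lc cK.
exists ((1 + Num.max 0 M) ^+ (2 * p)).
  by rewrite exprn_ge0 // addr_ge0 // le_max lexx.
move=> g Kg; apply: lerXn2r; rewrite ?inE ?nnegrE ?addr_ge0 ?le_max ?lexx //.
by rewrite lerD2l le_max HM ?orbT.
Qed.

(* [cutoff f h d] agrees with [h] where [|f| >= 2 d] and vanishes where
   [|f| <= d], so its support stays inside the support of [f]. *)
Definition cutoff f h (d : R) : S -> CC R :=
  fun s => h s * ((ramp d (cabs (f s)))%:C)%C.

Lemma cutoff_Cc_on f h (d : R) : 0 < d -> is_section GG SS pi iota f -> continuous f ->
  Cc_on GG SS pi iota setT h -> Cc_on GG SS pi iota (supp pi f) (cutoff f h d).
Proof.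
move=> d0 Hf fc [Hh hc [K [cK _ hK]]]; split.
- exact: (is_sectionM_cabs (fun r => (ramp d r)%:C%C) Hf Hh).
- by move=> s; apply: cvgM; [exact: hc | exact: continuous_ramp_cabs].
- exists (K `&` superlevel pi f d); split.
  + exact: compact_closedI cK (closed_superlevel Htw fc).
  + by move=> g [_ /(superlevel_sub_supp Htw Hf d0)].
  + move=> s Ks; rewrite /cutoff.
    have [Kps|/hK ->] := pselect (K (pi s)); last by rewrite mul0r.
    have fs : cabs (f s) <= d.
      by rewrite leNgt; apply/negP => /ltW /(superlevelP Htw _ _ Hf) fs; apply: Ks.
    by rewrite ramp_eq0 // rmorph0 mulr0.
Qed.

Lemma fibre_sum_cutoff_le F f h (K : set G) (d C : R) : 0 < d -> 0 <= C ->
  is_section GG SS pi iota f -> is_section GG SS pi iota h ->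
  (forall s, ~ K (pi s) -> h s = 0) ->
  (forall g, K g -> (1 + L g) ^+ (2 * p) <= C) ->
  (fibre_sum F (fun s => f s - cutoff f h d s)%R <=
   8%:E * fibre_sum F (fun s => f s - h s)%R +
   (8 * d ^+ 2 * C)%R%:E * \esum_(g in F) (\1_K g : R)%:E)%E.
Proof.
move=> d0 C0 Hf Hh hK wK.
have Hfh := is_sectionB Hf Hh.
have Hfh' := is_sectionB Hf (is_sectionM_cabs (fun r => (ramp d r)%:C%C) Hf Hh).
have pointwise g :
    sabs pi (fun s => f s - cutoff f h d s) g ^+ 2 * (1 + L g) ^+ (2 * p) <=
    8 * (sabs pi (fun s => f s - h s) g ^+ 2 * (1 + L g) ^+ (2 * p)) +
    8 * d ^+ 2 * C * \1_K g.
  have [s <-] := tw_pi_surj Htw g; rewrite !(sabsE Htw) //.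
  have w1 := weight_ge1 (pi s); set w := (1 + L (pi s)) ^+ (2 * p) in w1 *.
  have [Ks|nKs] := pselect (K (pi s)).
    have := ramp_cutoff_err (f s) (h s) d0.
    have := wK _ Ks; rewrite -/w indicE mem_set // mulr1 => wC err.
    have := ler_wpM2r (ltW (lt_le_trans ltr01 w1)) err.
    have := ler_wpM2l (sqr_ge0 d) wC.
    lra.
  rewrite indicE memNset // /cutoff hK // mul0r subr0 mulr0 addr0.
  have := mulr_ge0 (sqr_ge0 (cabs (f s))) (le_trans ler01 w1); lra.
rewrite /fibre_sum; apply: (@le_trans _ _ (\esum_(g in F)
    (8%:E * (sabs pi (fun s => f s - h s) g ^+ 2 * (1 + L g) ^+ (2 * p))%R%:E +
     (8 * d ^+ 2 * C)%R%:E * (\1_K g : R)%:E))%E).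
  by apply: le_esum => g _; rewrite -!EFinM -EFinD lee_fin pointwise.
have c0 : 0 <= 8 * d ^+ 2 * C by have := sqr_ge0 d; nra.
have ind0 g : 0 <= (\1_K g : R) by rewrite indicE.
have w0 g : 0 <= sabs pi (fun s => f s - h s) g ^+ 2 * (1 + L g) ^+ (2 * p).
  by rewrite mulr_ge0 ?sqr_ge0 ?exprn_ge0 ?addr_ge0.
rewrite esumD => [|g _|g _]; first last.
- by apply: mule_ge0; rewrite lee_fin.
- by apply: mule_ge0; rewrite lee_fin.
by apply: leeD; apply: esumZl_le => // g; rewrite lee_fin.
Qed.

End WeightedNorm.

Lemma in_closure_Cc_supp (R : realType) (G S : topologicalType) (GG : gpd G)
    (SS : gpd S) (pi : S -> G) (iota : CC R -> G -> S) (L : G -> R) (p : nat)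
    (f : S -> CC R) :
  lch_etale_groupoid GG -> is_twist GG SS pi iota ->
  (forall g, 0 <= L g) -> continuous L ->
  is_section GG SS pi iota f -> in_closure_Cc GG SS pi iota L p setT f ->
  in_closure_Cc GG SS pi iota L p (supp pi f) f.
Proof.
move=> Het Htw L_ge0 Lc Hf Hcl e e0.
have HGG : is_groupoid GG by case: Het => -[].
have fc := in_closure_Cc_continuous Htw HGG L_ge0 Hf Hcl.
have e8 : 0 < e / 8 by rewrite divr_gt0.
have [h [hCc fh]] := Hcl _ e8.
have [Hh _ [K [cK _ hK]]] := hCc.
have [C C0 wK] := weight_ubound p L_ge0 Lc cK.
have [N KN] := etale_fibre_count_le Het R cK.
pose M := C * N%:R.
have M0 : 0 <= M by rewrite mulr_ge0.
pose d := e / (8 * (M + 1)).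
have d0 : 0 < d by rewrite divr_gt0 // mulr_gt0 //; lra.
have dM : 8 * d ^+ 2 * M <= e ^+ 2 / 8.
  have de : d * (8 * (M + 1)) = e by rewrite divfK // gt_eqF //; lra.
  nra.
exists (cutoff f h d); split; first exact: (cutoff_Cc_on Htw d0 Hf fc hCc).
apply: (@le_lt_trans _ _ (e / 2)%:E); last by rewrite lte_fin; lra.
apply: norm2pL_le => F HF; rewrite sqrte_le; last lra.
apply: le_trans (fibre_sum_cutoff_le Htw L_ge0 F d0 C0 Hf Hh hK wK) _.
have HB : (fibre_sum pi L p F (fun s => f s - h s)%R <= ((e / 8) ^+ 2)%:E)%E.
  rewrite -sqrte_le; last lra.
  exact: le_trans (fibre_sum_le_norm2pL _ _ _ _ HF) (ltW fh).
apply: le_trans (leeD (lee_wpmul2l _ HB) (lee_wpmul2l _ (KN F HF))) _.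
- by rewrite lee_fin.
- by rewrite lee_fin; have := sqr_ge0 d; nra.
by rewrite -!EFinM -EFinD lee_fin; move: dM; rewrite /M; lra.
Qed.

Theorem proposition3p8 (R : realType) (G S : topologicalType)
    (GG : gpd G) (SS : gpd S) (pi : S -> G) (iota : CC R -> G -> S)
    (L : G -> R) :
  lch_etale_groupoid GG ->
  is_twist GG SS pi iota ->
  length_function GG L -> continuous L ->
  (forall (p : nat) (f : S -> CC R) (U : set G), (0 < p)%N ->
     H2Lp GG SS pi iota L p f -> open U -> supp pi f = U ->
     in_closure_Cc GG SS pi iota L p U f) /\
  (forall (f : S -> CC R) (U : set G),
     H2L_on GG SS pi iota L setT f -> open U -> supp pi f = U ->
     H2L_on GG SS pi iota L U f).
Proof.
move=> Het Htw [L_ge0 _ _ _] Lc; split.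
- by move=> p f U _ [Hf Hcl] _ <-; exact: in_closure_Cc_supp.
- move=> f U [Hcl HC0] _ <-; have Hf : is_section GG SS pi iota f by case: HC0.
  split; last exact: (C0_on_supp Htw HC0).
  by move=> p p0; apply: in_closure_Cc_supp => //; exact: Hcl.
Qed.
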